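(* Let $G$ be a graph with vertex set $[n]$, let $\pi\in\mathrm{Ham}(G)$ be a Hamiltonian path of $G$, and let $p=(p_1,\dots,p_n)\in[n]^n$ be a parking preference. Then $p\in\mathrm{FPF}(G)$ with $\mathcal{O}_G(p)=\pi$ if and only if for every $i\in[n]$ we have $p_i\in S_i$, where $S_i:=\{s\in[n] : \pi_s\in B(i,\pi,G)\}$ is the set of positions in $\pi$ occupied by elements of the blocking sequence $B(i,\pi,G)$.
   Context: $[n]=\{1,\dots,n\}$, $S_n$ is the set of permutations of $[n]$ in one-line notation $\pi=\pi_1\cdots\pi_n$. Friendship parking process for a graph $G$ on $[n]$ and a parking preference $p\in[n]^n$: cars $1,\dots,n$ enter in order into spots $1,\dots,n$ (initially empty); spot $k$ is available for car $i$ if it is unoccupied when $i$ enters and each of spots $k-1,k+1$ is unoccupied or occupied by a car adjacent to $i$ in $G$ (spots $0,n+1$ count as unoccupied); car $i$ parks in the first available spot $k\ge p_i$, failing otherwise. $\mathrm{FPF}(G)$ is the set of $p$ for which all cars park; for such $p$, $\mathcal{O}_G(p)=\pi\in S_n$ where $\pi_k$ is the car in spot $k$ at the end. $\mathrm{Ham}(G)$ is the set of permutations $\pi\in S_n$ with $\{\pi_k,\pi_{k+1}\}$ an edge of $G$ for all $k\in[n-1]$. Blockers: for $\pi\in\mathrm{Ham}(G)$ and $i\in[n]$, an element $j=\pi_k$ is a blocker for $i$ in $\pi$ if either (1) $j\le i$, or (2) $j>i$ and there is $\ell\in\{\pi_{k-1},\pi_{k+1}\}$ (a neighbour of $j$ in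 the sequence $\pi$) with $\ell<i$ and $\ell$ not adjacent to $i$ in $G$. The blocking sequence $B(i,\pi,G)$ is the longest contiguous block $\pi_s\pi_{s+1}\cdots\pi_{t}$ of $\pi$ ending at $\pi_t=i$ all of whose elements are blockers for $i$; $b(i,\pi,G)$ denotes its length. *)

(* Everything is 0-indexed: vertex/car/spot/position x in 'I_n
   (value 0..n-1) stands for x+1 in the paper's [n] = {1..n}. *)
From mathcomp Require Import all_boot fingroup perm.
Set Implicit Arguments. Unset Strict Implicit. Unset Printing Implicit Defensive.

Section FriendshipParking.
Variable n : nat.
Variable G : rel 'I_n.

(* a state maps each spot k (a nat; spots are 0..n-1) to the car parked there *)
Definition pstate := nat -> option 'I_n.

Definition empty_state : pstate := fun _ => None.

(* spot j is unoccupied or occupied by a car adjacent to i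
   (spots outside 0..n-1 are never occupied, hence count as unoccupied) *)
Definition nbr_ok (st : pstate) (i : 'I_n) (j : nat) : bool :=
  if st j is Some c then G i c else true.

Definition available (st : pstate) (i : 'I_n) (k : nat) : bool :=
  [&& k < n, st k == None, (k == 0) || nbr_ok st i k.-1 & nbr_ok st i k.+1].

Definition park_spot (st : pstate) (i : 'I_n) (pref : nat) : option nat :=
  ohead [seq k <- iota pref (n - pref) | available st i k].

Definition step (p : 'I_n -> 'I_n) (i : 'I_n) (st : pstate) : option pstate :=
  if park_spot st i (p i) is Some k then
    Some (fun j => if j == k then Some i else st j)
  else None.

(* cars 1..n enter in order; None = some car failed to park *)
Definition run (p : 'I_n -> 'I_n) : option pstate :=
  foldl (fun ost i => obind (step p i) ost) (Some empty_state) (enum 'I_n).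

Definition in_FPF (p : 'I_n -> 'I_n) : bool := isSome (run p).

(* O_G(p)_k = car in spot k at the end (None if the process failed) *)
Definition outcome (p : 'I_n -> 'I_n) (k : 'I_n) : option 'I_n :=
  if run p is Some st then st k else None.

Definition in_Ham (pi : {perm 'I_n}) : Prop :=
  forall (k : 'I_n) (hk : k.+1 < n), G (pi k) (pi (Ordinal hk)).

Definition oneline (pi : {perm 'I_n}) : seq 'I_n := [seq pi k | k <- enum 'I_n].

Definition bad_nbr (pi : {perm 'I_n}) (i : 'I_n) (m : nat) : bool :=
  (m < n) && (let l := nth i (oneline pi) m in (l < i) && ~~ G l i).

Definition blocker_at (pi : {perm 'I_n}) (i : 'I_n) (k : nat) : bool :=
  let j := nth i (oneline pi) k in
  (j <= i) ||
  ((i < j) && (((k != 0) && bad_nbr pi i k.-1) || bad_nbr pi i k.+1)).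

Definition pos (pi : {perm 'I_n}) (i : 'I_n) : nat := index i (oneline pi).

(* b(i,pi,G): length of the longest contiguous block ending at i made of blockers *)
Definition blen (pi : {perm 'I_n}) (i : 'I_n) : nat :=
  \max_(m < (pos pi i).+2 |
          all (blocker_at pi i) (iota ((pos pi i).+1 - m) m)) m.

Definition Bseq (pi : {perm 'I_n}) (i : 'I_n) : seq 'I_n :=
  [seq nth i (oneline pi) r | r <- iota ((pos pi i).+1 - blen pi i) (blen pi i)].

Definition Sset (pi : {perm 'I_n}) (i : 'I_n) : {set 'I_n} :=
  [set s : 'I_n | pi s \in Bseq pi i].

End FriendshipParking.

From mathcomp Require Import all_boot fingroup perm zify.
From Stdlib Require Import FunctionalExtensionality.
Set Implicit Arguments. Unset Strict Implicit. Unset Printing Implicit Defensive.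

(* Suppose cars 0..i-1 occupy exactly their spots in
   pi.  Then spot pos(i) is available to car i, since its neighbours in pi are
   adjacent to i in G.  Every other spot of the blocking block is unavailable:
   a blocker j < i is parked there, and a blocker j > i has a neighbour l < i,
   not adjacent to i, already parked next to its spot.  The spot just before
   the block holds no blocker, so it is available.  Hence car i parks at
   pos(i) iff p_i lies in the block, and then cars 0..i occupy their spots in
   pi.  Conversely, cars never move, so if the final arrangement is pi then
   every car i parked at pos(i). *)

Lemma ohead_filter_iota_Some (a : pred nat) m N t :
  ohead [seq k <- iota m N | a k] = Some t <->
  [/\ m <= t < m + N, a t & forall k, m <= k < t -> ~~ a k].
Proof.
elim: N m => [|N IH] m /=; first by split=> // -[]; lia.
case am: (a m) => /=.
  split=> [[<-]|[Ht a_t na]]; first by split=> //; lia.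
  by case: (ltngtP m t) => Emt; [move: (na m); rewrite am; lia | lia | rewrite Emt].
rewrite IH; split=> -[Ht a_t na]; split=> //; first lia.
- by move=> k Hk; case: (ltngtP m k) => Emk; [apply: na; lia | lia | rewrite -Emk am].
- have : t != m by apply: contraTneq a_t => ->; rewrite am.
  lia.
- by move=> k Hk; apply: na; lia.
Qed.

Section Blocking.
Variable n : nat.
Variable G : rel 'I_n.
Variable pi : {perm 'I_n}.

Lemma nth_oneline x k (hk : k < n) : nth x (oneline pi) k = pi (Ordinal hk).
Proof.
rewrite /oneline (nth_map x) ?size_enum_ord //.
by congr (pi _); apply/val_inj; rewrite /= nth_enum_ord.
Qed.

Lemma posE i : pos pi i = (pi^-1)%g i.
Proof.
by rewrite /pos /oneline -{1}(permKV pi i) index_map ?index_enum_ord //; apply: perm_inj.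
Qed.

Lemma pos_lt i : pos pi i < n.
Proof. by rewrite posE. Qed.

Lemma perm_pos i (ht : pos pi i < n) : pi (Ordinal ht) = i.
Proof.
have -> : Ordinal ht = (pi^-1)%g i by apply/val_inj; rewrite /= posE.
by rewrite permKV.
Qed.

Lemma perm_neq_pos i k (hk : k < n) : k != pos pi i -> pi (Ordinal hk) != i.
Proof. by apply: contra => /eqP <-; rewrite posE permK. Qed.

Lemma blocker_at_pos i : blocker_at G pi i (pos pi i).
Proof. by rewrite /blocker_at (nth_oneline _ (pos_lt i)) perm_pos leqnn. Qed.

Lemma bad_nbr_out i k : n <= k -> bad_nbr G pi i k = false.
Proof. by move=> Hk; rewrite /bad_nbr ltnNge Hk. Qed.

Lemma bad_nbrE i k (hk : k < n) :
  bad_nbr G pi i k = (pi (Ordinal hk) < i) && ~~ G (pi (Ordinal hk)) i.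
Proof. by rewrite /bad_nbr hk (nth_oneline _ hk). Qed.

Lemma blen_spec i :
  [/\ 0 < blen G pi i, blen G pi i <= (pos pi i).+1,
      all (blocker_at G pi i) (iota ((pos pi i).+1 - blen G pi i) (blen G pi i)) &
      blen G pi i < (pos pi i).+1 -> ~~ blocker_at G pi i (pos pi i - blen G pi i)].
Proof.
rewrite /blen; set t := pos pi i.
set P := fun m : 'I_t.+2 => all (blocker_at G pi i) (iota (t.+1 - m) m).
have P0 : P ord0 by [].
rewrite (bigmax_eq_arg _ P0); case: arg_maxnP => // b Pb Hmax.
have b_gt0 : 0 < b.
  have := Hmax (Ordinal (isT : 1 < t.+2)).
  by rewrite /P /= subSS subn0 /= andbT; apply; apply: blocker_at_pos.
split=> //; first by rewrite -ltnS.
move=> Hb; apply/negP => Hbl.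
have := Hmax (Ordinal (Hb : b.+1 < t.+2)); rewrite /P /=.
have -> : t.+1 - b.+1 = t - b by [].
have -> : (t - b).+1 = t.+1 - b by lia.
by rewrite Hbl => /(_ Pb); lia.
Qed.

Lemma mem_Sset i (s : 'I_n) :
  (s \in Sset G pi i) = ((pos pi i).+1 - blen G pi i <= s <= pos pi i).
Proof.
have [_ Hb _ _] := blen_spec i.
rewrite inE /Bseq; apply/mapP/idP.
- case=> r; rewrite mem_iota => Hr.
  have hr : r < n by have := pos_lt i; lia.
  by rewrite (nth_oneline _ hr) => /perm_inj -> /=; lia.
- move=> Hs; exists (nat_of_ord s); first by rewrite mem_iota; lia.
  by rewrite (nth_oneline _ (ltn_ord s)); congr (pi _); apply/val_inj.
Qed.

End Blocking.

Section PrefixState.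
Variable n : nat.
Variable G : rel 'I_n.
Hypothesis G_sym : symmetric G.
Variable pi : {perm 'I_n}.
Hypothesis Hpi : in_Ham G pi.

Definition prefix_state (m : nat) : pstate n := fun k =>
  if insub k is Some ko then (if pi ko < m then Some (pi ko) else None) else None.

Lemma prefix_stateE m k (hk : k < n) :
  prefix_state m k = if pi (Ordinal hk) < m then Some (pi (Ordinal hk)) else None.
Proof. by rewrite /prefix_state insubT. Qed.

Lemma prefix_state_out m k : n <= k -> prefix_state m k = None.
Proof. by move=> Hk; rewrite /prefix_state insubF // ltnNge Hk. Qed.

Lemma prefix_state0 : prefix_state 0 = empty_state n.
Proof. by apply: functional_extensionality => k; rewrite /prefix_state; case: insub. Qed.

Lemma prefix_state_full (k : 'I_n) : prefix_state n k = Some (pi k).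
Proof. by rewrite /prefix_state valK ltn_ord. Qed.

Lemma prefix_stateS (i : 'I_n) :
  (fun j => if j == pos pi i then Some i else prefix_state i j) = prefix_state i.+1.
Proof.
apply: functional_extensionality => j; case: (ltnP j n) => hj.
- rewrite !(prefix_stateE _ hj); case: eqP => [Ej|/eqP Ej].
    by subst j; rewrite perm_pos ltnSn.
  have /eqP Hne : pi (Ordinal hj) != i by apply: perm_neq_pos.
  have Hne' : nat_of_ord (pi (Ordinal hj)) <> i by move=> /val_inj.
  by have -> : (pi (Ordinal hj) < i.+1) = (pi (Ordinal hj) < i) by lia.
- by rewrite !prefix_state_out //; case: eqP => // Ej; have := pos_lt pi i; lia.
Qed.

Lemma nbr_ok_prefix_state (i : 'I_n) k :
  nbr_ok G (prefix_state i) i k = ~~ bad_nbr G pi i k.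
Proof.
case: (ltnP k n) => hk; last by rewrite /nbr_ok prefix_state_out // bad_nbr_out.
rewrite /nbr_ok (prefix_stateE _ hk) (bad_nbrE _ _ _ hk) G_sym.
by case: ifP => //= _; rewrite negbK.
Qed.

Lemma available_prefix_stateE (i : 'I_n) k (hk : k < n) :
  k != pos pi i -> available G (prefix_state i) i k = ~~ blocker_at G pi i k.
Proof.
move=> /(perm_neq_pos hk) /eqP Hne.
have {}Hne : nat_of_ord (pi (Ordinal hk)) <> i by move=> /val_inj.
rewrite /available /blocker_at hk (prefix_stateE _ hk) (nth_oneline _ _ hk).
rewrite !nbr_ok_prefix_state.
case: ltngtP => [//|_|/Hne //] /=.
by rewrite negb_or negb_and negbK.
Qed.

Lemma available_pos (i : 'I_n) : available G (prefix_state i) i (pos pi i).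
Proof.
have ht := pos_lt pi i.
rewrite /available ht (prefix_stateE _ ht) perm_pos ltnn !nbr_ok_prefix_state /=.
apply/andP; split.
- case: (posnP (pos pi i)) => [->//|t_gt0]; apply/orP; right.
  have hk : (pos pi i).-1 < n by lia.
  have hk' : (Ordinal hk).+1 < n by rewrite /=; lia.
  have := Hpi hk'.
  have -> : Ordinal hk' = Ordinal ht by apply/val_inj => /=; lia.
  by rewrite perm_pos (bad_nbrE _ _ _ hk) => ->; rewrite andbF.
- case: (ltnP (pos pi i).+1 n) => hk; last by rewrite bad_nbr_out.
  have := Hpi (hk : (Ordinal ht).+1 < n); rewrite perm_pos.
  have -> : Ordinal (hk : (Ordinal ht).+1 < n) = Ordinal hk by apply/val_inj.
  by rewrite (bad_nbrE _ _ _ hk) G_sym => ->; rewrite andbF.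
Qed.

Lemma park_spot_prefix_state (i q : 'I_n) :
  park_spot G (prefix_state i) i q = Some (pos pi i) <-> q \in Sset G pi i.
Proof.
have [b_gt0 Hb Hall Hbefore] := blen_spec G pi i.
have ht := pos_lt pi i.
rewrite mem_Sset /park_spot ohead_filter_iota_Some; split.
- move=> [Hq _ Hfirst]; apply/andP; split; last lia.
  rewrite leqNgt; apply/negP => Hlt.
  have hk : pos pi i - blen G pi i < n by lia.
  have := Hfirst (pos pi i - blen G pi i) ltac:(lia).
  by rewrite (available_prefix_stateE hk) ?negbK; [apply/negP/Hbefore | ]; lia.
- move=> /andP [Hlo Hhi]; split; [lia | exact: available_pos |].
  move=> k Hk; have hk : k < n by lia.
  rewrite (available_prefix_stateE hk) ?negbK; last lia.
  by apply: (allP Hall); rewrite mem_iota; lia.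
Qed.

End PrefixState.

Section Run.
Variable n : nat.
Variable G : rel 'I_n.
Variable p : 'I_n -> 'I_n.

Let run_step (ost : option (pstate n)) (i : 'I_n) := obind (step G p i) ost.

Definition run_upto (m : nat) : option (pstate n) :=
  foldl run_step (Some (empty_state n)) (take m (enum 'I_n)).

Lemma run_upto0 : run_upto 0 = Some (empty_state n).
Proof. by rewrite /run_upto take0. Qed.

Lemma run_uptoS m (hm : m < n) :
  run_upto m.+1 = obind (step G p (Ordinal hm)) (run_upto m).
Proof.
rewrite /run_upto (take_nth (Ordinal hm)) ?size_enum_ord // foldl_rcons.
by congr (obind (step G p _) _); apply/val_inj; rewrite /= nth_enum_ord.
Qed.

Lemma run_upto_full : run_upto n = run G p.
Proof. by rewrite /run_upto take_oversize // size_enum_ord. Qed.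

Lemma step_extends i st st' k c :
  step G p i st = Some st' -> st k = Some c -> st' k = Some c.
Proof.
rewrite /step; case Ek: park_spot => [k0|] // [<-] Hk.
move: Ek; rewrite /park_spot ohead_filter_iota_Some => -[_ Hav _].
by case: eqP => // Ek; move: Hav; rewrite /available -Ek Hk => /and4P [].
Qed.

Lemma run_upto_extends m st' : run G p = Some st' ->
  exists2 st, run_upto m = Some st & forall k c, st k = Some c -> st' k = Some c.
Proof.
rewrite /run -(cat_take_drop m (enum _)) foldl_cat -/(run_upto m).
case: (run_upto m) => [st|]; last by elim: (drop m _).
move=> Hst; exists st => //.
elim: (drop m _) st Hst => [|j s IH] st0 /=; first by move=> [<-].
case Est: (step G p j st0) => [st1|] /=; last by clear IH; elim: s.
by move=> /IH Hst1 k c /(step_extends Est); apply: Hst1.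
Qed.

End Run.

Section ParkingInduction.
Variable n : nat.
Variable G : rel 'I_n.
Hypothesis G_sym : symmetric G.
Variable pi : {perm 'I_n}.
Hypothesis Hpi : in_Ham G pi.
Variable p : 'I_n -> 'I_n.

Lemma run_upto_prefix_state :
  (forall i, p i \in Sset G pi i) ->
  forall m, m <= n -> run_upto G p m = Some (prefix_state pi m).
Proof.
move=> Hp; elim=> [|m IH] hm; first by rewrite run_upto0 prefix_state0.
rewrite (run_uptoS _ _ hm) (IH (ltnW hm)) /= /step.
by rewrite (park_spot_prefix_state G_sym Hpi (Ordinal hm) _).2 // prefix_stateS.
Qed.

Lemma Sset_of_final_state st :
  run G p = Some st -> (forall k : 'I_n, st k = Some (pi k)) ->
  forall m, m <= n ->
  run_upto G p m = Some (prefix_state pi m) /\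
  forall c : 'I_n, c < m -> p c \in Sset G pi c.
Proof.
move=> Hrun Hfinal; elim=> [|m IH] hm; first by rewrite run_upto0 prefix_state0.
have [IHrun IHS] := IH (ltnW hm); set c := Ordinal hm.
have [st1 Hst1 Hext] := run_upto_extends m.+1 Hrun.
move: Hst1; rewrite (run_uptoS _ _ hm) IHrun /= /step.
case Ek: park_spot => [k|] // [Est1].
have hk : k < n.
  move: Ek; rewrite /park_spot ohead_filter_iota_Some => -[].
  by have := ltn_ord (p c); lia.
have /Hext : st1 (Ordinal hk) = Some c by rewrite -Est1 /= eqxx.
rewrite Hfinal => -[Epi].
have Ekpos : k = pos pi c by rewrite posE -Epi permK.
have Hc : p c \in Sset G pi c.
  by apply/(park_spot_prefix_state G_sym Hpi); rewrite -Ekpos.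
split; first by rewrite Ekpos prefix_stateS.
move=> c'; rewrite ltnS leq_eqVlt => /predU1P [Ec'|]; last exact: IHS.
by rewrite (_ : c' = c) //; apply/val_inj.
Qed.

End ParkingInduction.

Theorem theorem2p6 (n : nat) (G : rel 'I_n)
    (G_sym : symmetric G) (G_irr : irreflexive G)
    (pi : {perm 'I_n}) (Hpi : in_Ham G pi) (p : 'I_n -> 'I_n) :
  (in_FPF G p /\ (forall k : 'I_n, outcome G p k = Some (pi k))) <->
  (forall i : 'I_n, p i \in Sset G pi i).
Proof.
rewrite /in_FPF /outcome; split.
- case Erun: (run G p) => [st|] [] // _ Hfinal i.
  have [_ HS] := Sset_of_final_state G_sym Hpi Erun Hfinal (leqnn n).
  exact: HS i (ltn_ord i).
- move=> Hp; have := run_upto_prefix_state G_sym Hpi Hp (leqnn n).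
  by rewrite run_upto_full => ->; split=> // k; rewrite prefix_state_full.
Qed.
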